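(* Let $G=(L\cup R,E)$ be a left-regular Tanner graph (without parallel edges) with left degree $d_l\ge 3$ and girth $g>4$. Let $\mathcal{S}\subset L$ be an $(a,b)$ trapping set with $b<a$ and $G(\mathcal{S})$ connected. Consider three cases: (E) $\mathcal{S}$ is elementary and $d_l(d_l-1)>b$; (O) $\mathcal{S}$ has a check node in $\Gamma_{\mathrm{o}}(\mathcal{S})$ of degree $d_o>1$ in $G(\mathcal{S})$, and $d_o(d_l-1)>b$; (Ev) $\mathcal{S}$ has a check node in $\Gamma_{\mathrm{e}}(\mathcal{S})$ of degree $d_e>2$ in $G(\mathcal{S})$, and $d_e(d_l-1)>b$. (Empty sums are $0$.) (a) If $g=4k$ for an integer $k>1$, then in case (E) \[a\ge 1+d_l+(d_l(d_l-1)-b)\sum_{i=0}^{k-3}(d_l-1)^i+\frac{(d_l(d_l-1)-b)(d_l-1)^{k-2}}{d_l};\] in case (O) $a\ge d_o+(d_o(d_l-1)-b+1)\sum_{i=0}^{k-2}(d_l-1)^i$; and in case (Ev) $a\ge d_e+(d_e(d_l-1)-b)\sum_{i=0}^{k-2}(d_l-1)^i$. (b) If $g=4k+2$ for a positive integer $k$, then in case (E) $a\ge 1+d_l+(d_l(d_l-1)-b)\sum_{i=0}^{k-2}(d_l-1)^i$; in case (O) \[a\ge d_o+(d_o(d_l-1)-b+1)\sum_{i=0}^{k-2}(d_l-1)^i+\frac{(d_o(d_l-1)-b+1)(d_l-1)^{k-1}}{d_l};\] and in case (Ev) \[a\ge d_e+(d_e(d_l-1)-b)\sum_{i=0}^{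k-2}(d_l-1)^i+\frac{(d_e(d_l-1)-b)(d_l-1)^{k-1}}{d_l}.\]
   Context: A Tanner graph is a bipartite graph $G=(L\cup R,E)$ with variable nodes $L$ and check nodes $R$; left-regular with left degree $d_l$ means every variable node has degree $d_l$; the girth is the length of a shortest cycle. For $\mathcal{S}\subset L$, $\Gamma(\mathcal{S})$ is the set of neighbors of $\mathcal{S}$ in $R$, and $G(\mathcal{S})$ is the induced subgraph on $\mathcal{S}\cup\Gamma(\mathcal{S})$. $\Gamma_{\mathrm{o}}(\mathcal{S})$ and $\Gamma_{\mathrm{e}}(\mathcal{S})$ are the check nodes of $\Gamma(\mathcal{S})$ with odd, respectively even, degree in $G(\mathcal{S})$. $\mathcal{S}$ is an $(a,b)$ trapping set if $|\mathcal{S}|=a$ and $|\Gamma_{\mathrm{o}}(\mathcal{S})|=b$; it is elementary if every check node of $G(\mathcal{S})$ has degree one or two in $G(\mathcal{S})$. *)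

From mathcomp Require Import all_boot all_order all_algebra.
Set Implicit Arguments. Unset Strict Implicit. Unset Printing Implicit Defensive.
Import Order.TTheory GRing.Theory Num.Theory.

(* A Tanner graph: variable nodes L, check nodes R (finite types), and a
   boolean adjacency adj v c (so there are no parallel edges). *)
Section Tanner.
Variables (L R : finType) (adj : L -> R -> bool).

Definition tedge : rel (L + R)%type := fun x y =>
  match x, y with
  | inl v, inr c => adj v c
  | inr c, inl v => adj v c
  | _, _ => false
  end.

Definition left_regular (dl : nat) : Prop :=
  forall v : L, #|[set c | adj v c]| = dl.

Definition is_cycle (p : seq (L + R)%type) : Prop := ucycle tedge p /\ 2 < size p.

Definition girth (g : nat) : Prop :=
  (exists p, is_cycle p /\ size p = g) /\ (forall p, is_cycle p -> g <= size p).

Definition Gam (S : {set L}) : {set R} := [set c | [exists v in S, adj v c]].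

Definition degS (S : {set L}) (c : R) : nat := #|[set v in S | adj v c]|.

Definition Gam_o (S : {set L}) : {set R} := [set c in Gam S | odd (degS S c)].
Definition Gam_e (S : {set L}) : {set R} := [set c in Gam S | ~~ odd (degS S c)].

Definition trapping_set (S : {set L}) (a b : nat) : Prop :=
  #|S| = a /\ #|Gam_o S| = b.

Definition elementary (S : {set L}) : Prop :=
  forall c, c \in Gam S -> (degS S c == 1) || (degS S c == 2).

Definition VS (S : {set L}) : {set (L + R)%type} :=
  [set x | match x with inl v => v \in S | inr c => c \in Gam S end].

Definition induced_connected (S : {set L}) : Prop :=
  forall x y, x \in VS S -> y \in VS S ->
    connect [rel u w | [&& tedge u w, u \in VS S & w \in VS S]] x y.

End Tanner.

From mathcomp Require Import all_boot all_order all_algebra.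
From mathcomp Require Import zify ring lra.
Import Order.TTheory GRing.Theory Num.Theory.
Set Implicit Arguments. Unset Strict Implicit. Unset Printing Implicit Defensive.

(* Grow from a root in G(S) the tree of non-backtracking walks.  As long as
   twice the depth stays below the girth, walks of the explored lengths end at
   pairwise distinct nodes, so the walks ending at variable nodes number at
   most a = |S|.  A walk at a variable node continues along d_l - 1 edges, and
   at a check node it continues unless the check has degree one in G(S); such
   checks are odd and each kills one walk, so at most b walks die overall
   (b - 1 when the root is itself an odd check).  Hence the j-th variable level
   carries at least (d_l - 1)^j (z0 (d_l - 1) - b') walks, where z0 walks sit
   on the first variable level, and summing the levels gives the bounds.  When
   the girth leaves room for one more variable level, its walks are counted by
   their last edge: each of its nodes is reached by at most d_l of them, which
   produces the terms divided by d_l.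
   Cases (O) and (Ev) root the tree at the given check node (z0 = its degree).
   Case (E) roots it at a variable node with no degree-one check neighbour,
   which exists because b < a, so that z0 >= d_l on level 2. *)

Lemma leq_mul_size_sumn (X : eqType) (s : seq X) (f : X -> nat) c :
  (forall x, x \in s -> c <= f x + 1) -> c * size s <= sumn (map f s) + size s.
Proof.
elim: s => [|x s IH] Hs /=; first by rewrite muln0.
have := Hs x (mem_head _ _); have := IH (fun y Hy => Hs y (@mem_behead _ (x :: s) _ Hy)).
lia.
Qed.

Lemma leq_size_sumn_count (X : eqType) (s : seq X) (f : X -> nat) (P : pred X) :
  (forall x, x \in s -> 0 < f x + P x) -> size s <= sumn (map f s) + count P s.
Proof.
elim: s => [|x s IH] Hs //=.
have := Hs x (mem_head _ _); have := IH (fun y Hy => Hs y (@mem_behead _ (x :: s) _ Hy)).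
lia.
Qed.

Lemma uniq_size_le_card (X : finType) (s : seq X) (A : {pred X}) :
  uniq s -> {subset s <= A} -> size s <= #|A|.
Proof. by move=> U Hs; rewrite -(card_uniqP U); apply: subset_leq_card; apply/subsetP. Qed.

Section Walks.
Variables (L R : finType) (adj : L -> R -> bool).
Local Notation V := (L + R)%type.
Local Notation edge := (tedge adj).

Lemma tedgeC x y : edge x y = edge y x. Proof. by case: x; case: y. Qed.
Lemma tedge_irr x : edge x x = false. Proof. by case: x. Qed.

Definition is_walk (d : V) (s : seq V) :=
  forall i, i.+1 < size s -> edge (nth d s i) (nth d s i.+1).
Definition nonbacktracking (d : V) (s : seq V) :=
  forall i, i.+2 < size s -> nth d s i != nth d s i.+2.

Lemma is_walk_rev d s : is_walk d s -> is_walk d (rev s).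
Proof.
move=> Hs i; rewrite size_rev => Hi; rewrite !nth_rev 1?tedgeC; try lia.
by rewrite (_ : size s - i.+1 = (size s - i.+2).+1); [apply: Hs|]; lia.
Qed.

Lemma nonbacktracking_rev d s : nonbacktracking d s -> nonbacktracking d (rev s).
Proof.
move=> Hs i; rewrite size_rev => Hi; rewrite !nth_rev 1?eq_sym; try lia.
by rewrite (_ : size s - i.+1 = (size s - i.+3).+2); [apply: Hs|]; lia.
Qed.

Lemma is_walk_cat d s1 s2 : is_walk d s1 -> is_walk d s2 ->
  (forall i j, i < size s1 -> j < size s2 -> size s1 + j = i.+1 ->
     edge (nth d s1 i) (nth d s2 j)) ->
  is_walk d (s1 ++ s2).
Proof.
move=> H1 H2 H12 i; rewrite size_cat => Hi; rewrite !nth_cat.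
have [lt1|ge1] := ltnP i.+1 (size s1).
  by rewrite (ltnW lt1); apply: H1.
have [lt0|ge0] := ltnP i (size s1); first by apply: H12; lia.
rewrite (_ : i.+1 - size s1 = (i - size s1).+1); last lia.
by apply: H2; lia.
Qed.

Lemma nonbacktracking_cat d s1 s2 : nonbacktracking d s1 -> nonbacktracking d s2 ->
  (forall i j, i < size s1 -> j < size s2 -> size s1 + j = i.+2 ->
     nth d s1 i != nth d s2 j) ->
  nonbacktracking d (s1 ++ s2).
Proof.
move=> H1 H2 H12 i; rewrite size_cat => Hi; rewrite !nth_cat.
have [lt2|ge2] := ltnP i.+2 (size s1).
  by rewrite (_ : i < size s1); [apply: H1 | lia].
have [lt0|ge0] := ltnP i (size s1); first by apply: H12; lia.
rewrite (_ : i.+2 - size s1 = (i - size s1).+2); last lia.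
by apply: H2; lia.
Qed.

Lemma cycle_of_nonuniq_walk d s : is_walk d s -> nonbacktracking d s -> ~~ uniq s ->
  exists2 p, is_cycle adj p & size p < size s.
Proof.
elim: s => [|x s IH] //= Hw Hn.
have Hw' : is_walk d s by move=> i Hi; exact: (Hw i.+1).
have Hn' : nonbacktracking d s by move=> i Hi; exact: (Hn i.+1).
case Us: (uniq s); last first.
  by move=> _; have [p Hp Hs] := IH Hw' Hn' (negbT Us); exists p => //; lia.
rewrite andbT negbK => xs.
set i := index x s.
have Hi : i < size s by rewrite index_mem.
have Hx : nth d s i = x by exact: nth_index.
have Hi2 : 1 < i.
  case: i Hi Hx => [|[|i]] // Hi Hx.
  - by move: (Hw 0 Hi); rewrite /= Hx tedge_irr.
  - by move: (Hn 0 Hi); rewrite /= Hx eqxx.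
exists (x :: take i s); last by rewrite /= size_take Hi; lia.
split; last by rewrite /= size_take Hi; lia.
rewrite /ucycle /= -Hx -take_nth // Hx take_uniq // andbT in_take // ltnn andbT.
by apply: take_path; apply/(pathP d) => j Hj; exact: (Hw j).
Qed.

Variables (S : {set L}) (r : V).

(* [walks n] lists the non-backtracking walks of length [n] in G(S) from [r],
   each stored reversed: its head is the current endpoint, its last element [r]. *)
Definition extends (w : seq V) (y : V) : bool :=
  [&& edge (head r w) y, y \in VS adj S & y != nth r w 1].

Fixpoint walks n : seq (seq V) :=
  if n is n'.+1 then [seq y :: w | w <- walks n', y <- filter (extends w) (enum {: V})]
  else [:: [:: r]].

Lemma mem_walksS n (w : seq V) :
  w \in walks n.+1 <-> exists u y, [/\ u \in walks n, extends u y & w = y :: u].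
Proof.
split.
  by case/allpairsPdep=> u [y [Hu]]; rewrite mem_filter => /andP[Hy _] ->; exists u, y.
case=> u [y [Hu Hy ->]]; apply/allpairsPdep; exists u, y; split=> //.
by rewrite mem_filter Hy mem_enum.
Qed.

Lemma walksP n (w : seq V) : w \in walks n ->
  [/\ size w = n.+1, nth r w n = r, is_walk r w & nonbacktracking r w].
Proof.
elim: n w => [|n IH] w.
  by rewrite mem_seq1 => /eqP ->; split=> // i /=; lia.
case/mem_walksS=> u [y [Hu /and3P[Huy _ Hyz] ->]].
have [Hs Hl Hw Hn] := IH u Hu.
split; first by rewrite /= Hs.
- by [].
- case=> [|i] Hi /=; last exact: Hw.
  by rewrite tedgeC (nth0 r u) in Huy *; case: u {Hu Hs Hl Hw Hn Hyz} Huy Hi.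
- by case=> [|i] Hi //=; apply: Hn.
Qed.

Lemma size_walks n (w : seq V) : w \in walks n -> size w = n.+1.
Proof. by case/walksP. Qed.

Lemma walks_uniq n : uniq (walks n).
Proof.
elim: n => [|n IH] //=; apply: allpairs_uniq_dep => //.
  by move=> u _; rewrite filter_uniq // enum_uniq.
by move=> [u1 y1] [u2 y2] _ _ /= [-> ->].
Qed.

Lemma head_walks_VS n (w : seq V) : r \in VS adj S -> w \in walks n -> head r w \in VS adj S.
Proof.
case: n => [|n] Hr; first by rewrite mem_seq1 => /eqP ->.
by case/mem_walksS=> u [y [_ /and3P[_ Hy _] ->]].
Qed.

Variable g : nat.
Hypothesis girth_le : forall p, is_cycle adj p -> g <= size p.

Lemma walk_uniq n (w : seq V) : w \in walks n -> n < g -> uniq w.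
Proof.
move=> Hw Hn; have [Hs _ Hwk Hnb] := walksP Hw.
by apply/negPn/negP => /(cycle_of_nonuniq_walk Hwk Hnb) [p /girth_le]; lia.
Qed.

Lemma walk_at_root n (w : seq V) : w \in walks n -> n < g -> head r w = r -> n = 0.
Proof.
move=> Hw Hn Hh; have [Hs Hl _ _] := walksP Hw.
have := nth_uniq r (_ : 0 < size w) (_ : n < size w) (walk_uniq Hw Hn).
by rewrite nth0 Hh Hl eqxx => /(_ ltac:(lia) ltac:(lia)) /esym/eqP.
Qed.

(* Two walks that reach [y] from different predecessors close a cycle
   through [y] and the root. *)
Lemma cycle_of_walks_join m m' (u u' : seq V) y :
  u \in walks m -> u' \in walks m' -> extends u y -> extends u' y -> head r u != head r u' ->
  exists2 p, is_cycle adj p & size p < m + m' + 3.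
Proof.
move=> Hu Hu' Huy Huy' Hne.
have Hw : y :: u \in walks m.+1 by apply/mem_walksS; exists u, y.
have [Ss Ls Ws Ns] := walksP Hw.
have [Ss' Ls' Ws' Ns'] := walksP Hu'.
have nth_rev_u' i : i < m'.+1 -> nth r (rev u') i = nth r u' (m' - i).
  by move=> Hi; rewrite nth_rev Ss' //; congr nth; lia.
suff : exists2 p, is_cycle adj p & size p < size (rev u' ++ y :: u).
  by rewrite size_cat size_rev Ss Ss'; case=> p Hp Hsz; exists p => //; lia.
apply: (cycle_of_nonuniq_walk (d := r)).
- apply: is_walk_cat (is_walk_rev Ws') Ws _ => i j; rewrite size_rev Ss' => Hi _ Hij.
  have -> : j = 0 by lia.
  by rewrite nth_rev_u' // (_ : m' - i = 0) ?nth0; [case/and3P: Huy' | lia].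
- apply: nonbacktracking_cat (nonbacktracking_rev Ns') Ns _ => i j.
  rewrite size_rev Ss' => Hi _ Hij; rewrite nth_rev_u' //.
  case: j Hij => [|[|j]] Hij; try lia.
  + by rewrite (_ : m' - i = 1) 1?eq_sym; [case/and3P: Huy' | lia].
  + by rewrite (_ : m' - i = 0) /= ?nth0 1?eq_sym; last lia.
- rewrite cat_uniq; apply/negP => /and3P[_ /negP Hdisj _]; apply/Hdisj/hasP; exists r.
    by rewrite -Ls mem_nth // Ss.
  by rewrite mem_rev -Ls' mem_nth // Ss'.
Qed.

Lemma walks_head_inj m m' (w w' : seq V) : w \in walks m -> w' \in walks m' ->
  head r w = head r w' -> m + m' < g -> w = w'.
Proof.
elim: m m' w w' => [|m IH] [|m'] w w' Hw Hw' Hh Hmm.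
- by move: Hw Hw'; rewrite !mem_seq1 => /eqP -> /eqP ->.
- move: Hw Hh; rewrite mem_seq1 => /eqP -> /esym Hh.
  by move: (walk_at_root Hw' ltac:(lia) Hh).
- move: Hw' Hh; rewrite mem_seq1 => /eqP -> Hh.
  by move: (walk_at_root Hw ltac:(lia) Hh).
move: Hw Hw' Hh => /mem_walksS [u [y [Hu Hy ->]]] /mem_walksS [u' [y' [Hu' Hy' ->]]] /= Eyy.
subst y'.
have [Huu|Huu] := eqVneq (head r u) (head r u').
  by rewrite (IH m' u u') //; lia.
by have [p /girth_le] := cycle_of_walks_join Hu Hu' Hy Hy' Huu; lia.
Qed.

Definition is_var (x : V) := if x is inl _ then true else false.
Definition in_S (x : V) := if x is inl v then v \in S else false.
Definition leaf_check (x : V) := if x is inr c then degS adj S c == 1 else false.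
Definition odd_check (x : V) := if x is inr c then c \in Gam_o adj S else false.

Lemma is_var_walk_head n (w : seq V) : w \in walks n -> is_var (head r w) = is_var r (+) odd n.
Proof.
elim: n w => [|n IH] w; first by rewrite mem_seq1 => /eqP -> /=; rewrite addbF.
case/mem_walksS=> u [y [Hu /and3P[Huy _ _] ->]] /=.
have -> : is_var y = ~~ is_var (head r u) by case: (head r u) y Huy => ? [].
by rewrite IH // addbN.
Qed.

Lemma in_S_walk_head n (w : seq V) : r \in VS adj S -> w \in walks n ->
  is_var r (+) odd n -> in_S (head r w).
Proof.
move=> Hr Hw; rewrite -(is_var_walk_head Hw); move: (head_walks_VS Hr Hw).
by rewrite /VS inE; case: (head r w).
Qed.

Definition nbrsS (x : V) := [set y | edge x y && (y \in VS adj S)].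

Lemma card_tedge_var dl v : left_regular adj dl -> #|[set y | edge (inl v) y]| = dl.
Proof.
move=> Hreg; rewrite -(Hreg v) -(card_imset _ (@inr_inj L R)).
apply: eq_card => -[u|c]; rewrite !inE /=; first by apply/esym/imsetP => -[].
by rewrite mem_imset ?inE //; apply: inr_inj.
Qed.

Lemma card_nbrsS_var dl v : left_regular adj dl -> v \in S -> #|nbrsS (inl v)| = dl.
Proof.
move=> Hreg Hv; rewrite -(card_tedge_var v Hreg); apply: eq_card => -[u|c]; rewrite !inE //=.
by case Hc: (adj v c); rewrite ?andbT //; apply/existsP; exists v; rewrite Hv Hc.
Qed.

Lemma card_nbrsS_check c : #|nbrsS (inr c)| = degS adj S c.
Proof.
rewrite /degS -(card_imset _ (@inl_inj L R)).
apply: eq_card => -[u|d]; rewrite !inE /=; last by apply/esym/imsetP => -[].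
by rewrite mem_imset ?inE 1?andbC //; apply: inl_inj.
Qed.

(* The [+ 1] accounts for the predecessor [nth r w 1], excluded by non-backtracking. *)
Lemma card_nbrsS_le_extensions (w : seq V) :
  #|nbrsS (head r w)| <= size (filter (extends w) (enum {: V})) + 1.
Proof.
have U : uniq (filter (extends w) (enum {: V})) by rewrite filter_uniq // enum_uniq.
rewrite -(card_uniqP U) (cardD1 (nth r w 1)) addnC leq_add ?leq_b1 //.
apply: subset_leq_card; apply/subsetP => y; rewrite !inE mem_filter mem_enum andbT.
by case/and3P=> Hy He Hv; rewrite /extends He Hy andbT /VS inE.
Qed.

Definition nwalks n := size (walks n).
Definition nleaf_ends n := count (fun w => leaf_check (head r w)) (walks n).

Lemma nwalksS n :
  nwalks n.+1 = sumn [seq size (filter (extends w) (enum {: V})) | w <- walks n].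
Proof. by rewrite /nwalks /= size_allpairs_dep. Qed.

Lemma card_nbrsS_root : #|nbrsS r| <= nwalks 1.
Proof.
have U : uniq (filter (extends [:: r]) (enum {: V})) by rewrite filter_uniq // enum_uniq.
rewrite nwalksS /= addn0 -(card_uniqP U); apply: subset_leq_card; apply/subsetP => y.
rewrite !inE mem_filter mem_enum andbT => /andP[Hry Hy].
rewrite /extends Hry /VS inE Hy /=.
by apply: contraTneq Hry => ->; rewrite tedge_irr.
Qed.

Lemma nwalks_var_level dl n : left_regular adj dl -> r \in VS adj S ->
  is_var r (+) odd n -> dl * nwalks n <= nwalks n.+1 + nwalks n.
Proof.
move=> Hreg Hr Hp; rewrite nwalksS; apply: leq_mul_size_sumn => w Hw.
have := in_S_walk_head Hr Hw Hp; have := card_nbrsS_le_extensions w.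
by case: (head r w) => // v Hb Hv; rewrite (card_nbrsS_var Hreg Hv) in Hb.
Qed.

Lemma nwalks_check_level n : r \in VS adj S -> ~~ (is_var r (+) odd n) ->
  nwalks n <= nwalks n.+1 + nleaf_ends n.
Proof.
move=> Hr Hp; rewrite nwalksS /nleaf_ends; apply: leq_size_sumn_count => w Hw.
have := head_walks_VS Hr Hw; have := card_nbrsS_le_extensions w.
move: Hp; rewrite -(is_var_walk_head Hw).
case: (head r w) => // c _; rewrite card_nbrsS_check /VS inE /Gam inE.
move=> Hb /existsP [u /andP[Hu Hc]].
have : 0 < degS adj S c by apply/card_gt0P; exists u; rewrite inE Hu.
by move: Hb => /=; case: (degS adj S c) => [|[|k]] //=; lia.
Qed.

Lemma nwalks_two_levels dl n : left_regular adj dl -> r \in VS adj S ->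
  is_var r (+) odd n -> (dl - 1) * nwalks n <= nwalks n.+2 + nleaf_ends n.+1.
Proof.
move=> Hreg Hr Hp; have := nwalks_var_level Hreg Hr Hp.
have := @nwalks_check_level n.+1 Hr; rewrite /= addbN Hp => /(_ isT).
by rewrite mulnBl mul1n; lia.
Qed.

Definition endpoints (ns : seq nat) := flatten [seq map (head r) (walks n) | n <- ns].
Definition separated (ns : seq nat) := forall m m', m \in ns -> m' \in ns -> m + m' < g.

Lemma mem_endpoints ns x : x \in endpoints ns ->
  exists n (w : seq V), [/\ n \in ns, w \in walks n & x = head r w].
Proof. by case/flattenP => s /mapP [n Hn ->] /mapP [w Hw ->]; exists n, w. Qed.

Lemma endpoints_uniq ns : uniq ns -> separated ns -> uniq (endpoints ns).
Proof.
elim: ns => //= n ns IH /andP[Hn Uns] Hsep; rewrite cat_uniq; apply/and3P; split.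
- rewrite map_inj_in_uniq ?walks_uniq // => w w' Hw Hw' Hh.
  by apply: (walks_head_inj Hw Hw' Hh); apply: Hsep; rewrite mem_head.
- apply/hasPn => x /mem_endpoints [m [w [Hm Hw ->]]]; apply/mapP => -[w' Hw' Heq].
  have E : w' = w.
    by apply: (walks_head_inj Hw' Hw (esym Heq)); apply: Hsep; rewrite ?mem_head ?inE ?Hm ?orbT.
  have := size_walks Hw; rewrite -E (size_walks Hw') => -[Enm].
  by move: Hn; rewrite Enm Hm.
- by apply: IH => // m m' Hm Hm'; apply: Hsep; rewrite inE ?Hm ?Hm' ?orbT.
Qed.

Lemma size_endpoints ns : size (endpoints ns) = sumn [seq nwalks n | n <- ns].
Proof. by elim: ns => //= n ns IH; rewrite size_cat size_map IH. Qed.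

Lemma count_endpoints ns (P : pred V) :
  count P (endpoints ns) = sumn [seq count (fun w => P (head r w)) (walks n) | n <- ns].
Proof. by elim: ns => //= n ns IH; rewrite count_cat count_map IH. Qed.

Lemma card_in_S : #|[set x | in_S x]| = #|S|.
Proof.
rewrite -(card_imset _ (@inl_inj L R)).
apply: eq_card => -[u|c]; rewrite !inE /=; last by apply/esym/imsetP => -[].
by rewrite mem_imset //; apply: inl_inj.
Qed.

Lemma sum_count_ends_le ns (P : pred V) : uniq ns -> separated ns ->
  sumn [seq count (fun w => P (head r w)) (walks n) | n <- ns] <= #|[set x | P x]|.
Proof.
move=> U Hsep; rewrite -count_endpoints -size_filter; apply: uniq_size_le_card.
  by rewrite filter_uniq // endpoints_uniq.
by move=> x; rewrite mem_filter inE => /andP[].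
Qed.

Lemma sum_nwalks_le_card ns : uniq ns -> separated ns ->
  (forall n w, n \in ns -> w \in walks n -> in_S (head r w)) ->
  sumn [seq nwalks n | n <- ns] <= #|S|.
Proof.
move=> U Hsep HS; rewrite -size_endpoints -card_in_S.
apply: uniq_size_le_card; first exact: endpoints_uniq.
by move=> x /mem_endpoints [n [w [Hn Hw ->]]]; rewrite inE; apply: HS Hn Hw.
Qed.

Lemma card_edges_from_vars dl (A : {set V}) : left_regular adj dl -> {subset A <= is_var} ->
  #|[set p : V * V | (p.1 \in A) && edge p.1 p.2]| = #|A| * dl.
Proof.
move=> Hreg HA; rewrite -sum1_card (eq_bigl (fun p : V * V => (p.1 \in A) && edge p.1 p.2)).
  rewrite -(pair_big_dep (mem A) edge (fun _ _ => 1)) /= -sum_nat_const.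
  apply: eq_bigr => x /HA; rewrite sum1dep_card; case: x => // v _; exact: card_tedge_var.
by move=> p; rewrite inE.
Qed.

(* A walk of length [l] is determined by its last edge, whose variable end
   lies in [S] but is not an endpoint of a walk of a length in [ns]. *)
Lemma nwalks_last_level dl ns l : left_regular adj dl -> uniq ns -> separated ns ->
  l \notin ns -> (forall m, m \in ns -> l + m < g) -> l.-1 + l.-1 < g -> 0 < l ->
  (forall n w, n \in ns -> w \in walks n -> in_S (head r w)) ->
  (forall w, w \in walks l -> in_S (head r w)) ->
  nwalks l + dl * sumn [seq nwalks n | n <- ns] <= dl * #|S|.
Proof.
move=> Hreg U Hsep Hl Hlns Hll Hl0 HS HSl.
set A := [set x | in_S x && (x \notin endpoints ns)].
have A_var : {subset A <= is_var} by move=> [u|c]; rewrite // inE.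
have HA : #|A| + sumn [seq nwalks n | n <- ns] <= #|S|.
  rewrite -size_endpoints -(card_uniqP (endpoints_uniq U Hsep)) -cardUI.
  rewrite (@eq_card0 _ [predI A & endpoints ns]) ?addn0 -?card_in_S; last first.
    by move=> x; rewrite !inE; case: (x \in endpoints ns); rewrite ?andbF.
  apply: subset_leq_card; apply/subsetP => x; rewrite !inE.
  case/orP; first by case/andP.
  by case/mem_endpoints => [n [w [Hn Hw ->]]]; apply: HS Hn Hw.
have HQ : nwalks l <= #|A| * dl.
  rewrite -(card_edges_from_vars Hreg A_var).
  case: l Hl Hlns Hll Hl0 HSl => // l Hl Hlns Hll _ HSl.
  rewrite /nwalks -(size_map (fun w => (head r w, nth r w 1))); apply: uniq_size_le_card.
    rewrite map_inj_in_uniq ?walks_uniq // => w w'.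
    move=> /mem_walksS [u [y [Hu _ ->]]] /mem_walksS [u' [y' [Hu' _ ->]]] /= [-> Eh].
    by rewrite (walks_head_inj Hu Hu' _ Hll) // -!nth0.
  move=> p /mapP [w Hw ->]; rewrite !inE HSl //=; apply/andP; split.
    apply/negP => /mem_endpoints [n [w' [Hn Hw' Heq]]].
    have E : w = w' by apply: (walks_head_inj Hw Hw' Heq); apply: Hlns.
    have := size_walks Hw; rewrite E (size_walks Hw') => -[En].
    by move: Hl; rewrite -En Hn.
  have [Hs _ Hwk _] := walksP Hw.
  by rewrite -nth0; apply: Hwk; rewrite Hs.
by have := leq_mul (leqnn dl) HA; rewrite mulnDr; lia.
Qed.

Definition levels a k := [seq 2 * j + a | j <- iota 0 k].

Lemma levels_uniq a k : uniq (levels a k).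
Proof. by rewrite map_inj_uniq ?iota_uniq // => x y; lia. Qed.

Lemma levels_separated a k : 4 * k + 2 * a < g + 4 -> separated (levels a k).
Proof.
by move=> Hk m m' /mapP[j Hj ->] /mapP[j' Hj' ->]; move: Hj Hj'; rewrite !mem_iota; lia.
Qed.

Lemma sumn_levels (f : nat -> nat) a k :
  sumn [seq f n | n <- levels a k] = \sum_(j < k) f (2 * j + a).
Proof.
by rewrite /levels sumnE !big_map -(big_mkord xpredT (fun j => f (2 * j + a))) /index_iota subn0.
Qed.

Lemma odd_level j a : odd (2 * j + a) = odd a.
Proof. by rewrite oddD oddM. Qed.

Lemma sum_levels_nwalks a k : r \in VS adj S -> is_var r (+) odd a ->
  4 * k + 2 * a < g + 4 -> \sum_(j < k) nwalks (2 * j + a) <= #|S|.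
Proof.
move=> Hr Hp Hk; rewrite -sumn_levels.
apply: sum_nwalks_le_card (levels_uniq a k) (levels_separated Hk) _.
by move=> n w /mapP [j _ ->] Hw; apply: in_S_walk_head Hr Hw _; rewrite odd_level.
Qed.

Lemma last_level_nwalks dl a k : left_regular adj dl -> r \in VS adj S ->
  is_var r (+) odd a -> 4 * k + 2 * a < g + 2 -> 0 < 2 * k + a ->
  nwalks (2 * k + a) + dl * \sum_(j < k) nwalks (2 * j + a) <= dl * #|S|.
Proof.
move=> Hreg Hr Hp Hk Hl; rewrite -sumn_levels.
have HS n w : w \in walks n -> odd n = odd a -> in_S (head r w).
  by move=> Hw Hn; apply: in_S_walk_head Hr Hw _; rewrite Hn.
have sep : separated (levels a k) by apply: levels_separated; lia.
have fresh : 2 * k + a \notin levels a k by apply/mapP => -[j]; rewrite mem_iota; lia.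
have far m : m \in levels a k -> 2 * k + a + m < g by case/mapP => j; rewrite mem_iota; lia.
have near : (2 * k + a).-1 + (2 * k + a).-1 < g by lia.
apply: nwalks_last_level Hreg (levels_uniq a k) sep fresh far near Hl _ _.
- by move=> n w /mapP [j _ ->] Hw; apply: HS Hw _; rewrite odd_level.
- by move=> w Hw; apply: HS Hw _; rewrite odd_level.
Qed.

Lemma leaf_check_odd x : leaf_check x -> odd_check x.
Proof.
case: x => //= c /eqP Hc; rewrite /Gam_o inE Hc andbT /Gam inE.
have : 0 < degS adj S c by rewrite Hc.
by case/card_gt0P => u; rewrite inE => /andP[Hu Huc]; apply/existsP; exists u; rewrite Hu.
Qed.

Lemma nleaf_ends_le n : nleaf_ends n <= count (fun w => odd_check (head r w)) (walks n).
Proof. by apply: sub_count => w; apply: leaf_check_odd. Qed.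

Lemma card_odd_check : #|[set x | odd_check x]| = #|Gam_o adj S|.
Proof.
rewrite -(card_imset _ (@inr_inj L R)).
apply: eq_card => -[u|c]; rewrite !inE /=; first by apply/esym/imsetP => -[].
by rewrite mem_imset //; apply: inr_inj.
Qed.

Lemma sum_levels_odd_checks a k : 4 * k + 2 * a < g + 4 ->
  \sum_(j < k) count (fun w => odd_check (head r w)) (walks (2 * j + a)) <= #|Gam_o adj S|.
Proof.
move=> Hk; rewrite -card_odd_check.
rewrite -(sumn_levels (fun n => count (fun w => odd_check (head r w)) (walks n))).
exact: sum_count_ends_le (levels_uniq a k) (levels_separated Hk).
Qed.
End Walks.

Lemma sum_even_levels_recl (F : nat -> nat) k :
  \sum_(j < k.+1) F (2 * j + 0) = F 0 + \sum_(j < k) F (2 * j + 2).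
Proof.
rewrite big_ord_recl; congr (_ + _); apply: eq_bigr => i _.
by rewrite lift0; congr F; lia.
Qed.

Lemma card_leaf_checks_le (L R : finType) (adj : L -> R -> bool) (S : {set L}) :
  #|[set c | degS adj S c == 1]| <= #|Gam_o adj S|.
Proof.
apply: subset_leq_card; apply/subsetP => c; rewrite inE => Hc.
exact: (leaf_check_odd (x := inr c) Hc).
Qed.

(* Each degree-one check has a unique neighbour in [S]; if every node of [S]
   had such a check, [S] would be no larger than the set of these checks,
   which are odd. *)
Lemma exists_var_without_leaf_check (L R : finType) (adj : L -> R -> bool) (S : {set L}) :
  #|Gam_o adj S| < #|S| ->
  exists2 v, v \in S & forall c, adj v c -> degS adj S c != 1.
Proof.
move=> HS; case: (boolP [exists v in S, [forall c, adj v c ==> (degS adj S c != 1)]]).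
  by case/exists_inP => v Hv /forallP Hc; exists v => // c; apply/implyP.
rewrite negb_exists_in => /forall_inP noleaf; exfalso; move: HS; apply/negP; rewrite -leqNgt.
apply: leq_trans (card_leaf_checks_le adj S).
set leaves := [set c | degS adj S c == 1].
pose nbr c := [pick u in S | adj u c].
have sub : Some @: S \subset nbr @: leaves.
  apply/subsetP => _ /imsetP [v Hv ->].
  have [c Hvc Hc1] : exists2 c, adj v c & degS adj S c == 1.
    move: (noleaf v Hv); rewrite negb_forall => /existsP [c].
    by rewrite negb_imply negbK => /andP[]; exists c.
  apply/imsetP; exists c; first by rewrite inE.
  rewrite /nbr; case: pickP => [u /andP[Hu Huc]|none]; last by move: (none v); rewrite Hv Hvc.
  move: Hc1; rewrite /degS => /cards1P [x Hx].
  have : v \in [set v in S | adj v c] by rewrite inE Hv Hvc.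
  have : u \in [set v in S | adj v c] by rewrite inE Hu Huc.
  by rewrite Hx !inE => /eqP -> /eqP ->.
rewrite -(card_imset _ (@Some_inj _)); apply: leq_trans (subset_leq_card sub) _.
exact: leq_imset_card.
Qed.

Local Open Scope ring_scope.

Lemma pred_natr_ge1 (n : nat) : (2 <= n)%N -> 1 <= n%:R - 1 :> rat.
Proof. by move=> Hn; rewrite lerBrDr (_ : 1 + 1 = 2%:R) // ler_nat. Qed.

(* [Z j] counts the walks on the j-th variable level, [m j] those dying on the
   check level after it, and [B] bounds the total number of deaths. *)
Section LevelGrowth.
Variables (Z m : nat -> nat) (q z0 B : rat).
Hypotheses (q_ge1 : 1 <= q) (Z_growth : forall j, q * (Z j)%:R <= (Z j.+1)%:R + (m j)%:R)
  (z0_le : z0 <= (Z 0)%:R).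

Lemma level_growth_telescoped j :
  q ^+ j * (q * (Z 0)%:R - \sum_(i < j.+1) (m i)%:R) <= (Z j.+1)%:R.
Proof.
elim: j => [|j IH]; first by rewrite expr0 mul1r big_ord1; have := Z_growth 0; lra.
rewrite big_ord_recr /= exprS.
have qIH := ler_wpM2l (le_trans ler01 q_ge1) IH.
have mq : (m j.+1)%:R <= q * q ^+ j * (m j.+1)%:R :> rat.
  by rewrite -exprS ler_peMl // exprn_ege1.
have := Z_growth j.+1.
have -> : q * q ^+ j * (q * (Z 0)%:R - (\sum_(i < j.+1) (m i)%:R + (m j.+1)%:R)) =
    q * (q ^+ j * (q * (Z 0)%:R - \sum_(i < j.+1) (m i)%:R)) - q * q ^+ j * (m j.+1)%:R.
  by ring.
lra.
Qed.

Lemma level_growth k j : \sum_(i < k) (m i)%:R <= B -> (j < k)%N ->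
  q ^+ j * (z0 * q - B) <= (Z j.+1)%:R.
Proof.
move=> HB Hj; apply: le_trans (level_growth_telescoped j).
have q_ge0 : 0 <= q := le_trans ler01 q_ge1.
rewrite ler_wpM2l ?exprn_ge0 // [z0 * q]mulrC lerB ?ler_wpM2l //.
apply: le_trans HB; rewrite -(subnKC Hj) big_split_ord /= lerDl.
exact: sumr_ge0.
Qed.

Lemma sum_levels_ge k : \sum_(i < k) (m i)%:R <= B ->
  z0 + (z0 * q - B) * \sum_(i < k) q ^+ i <= \sum_(j < k.+1) (Z j)%:R.
Proof.
move=> HB; rewrite big_ord_recl lerD // mulr_sumr; apply: ler_sum => j _.
by rewrite mulrC; apply: (level_growth HB).
Qed.

Lemma sum_levels_last_ge k (A dl : rat) : 0 < dl -> \sum_(i < k.+1) (m i)%:R <= B ->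
  (Z k.+1)%:R + dl * \sum_(j < k.+1) (Z j)%:R <= dl * A ->
  z0 + (z0 * q - B) * \sum_(i < k) q ^+ i + (z0 * q - B) * q ^+ k / dl <= A.
Proof.
move=> dl_gt0 HB Hlast.
have HBk : \sum_(i < k) (m i)%:R <= B.
  by apply: le_trans HB; rewrite big_ord_recr /= lerDl.
have Hsum := sum_levels_ge HBk.
have HZ : (z0 * q - B) * q ^+ k / dl <= (Z k.+1)%:R / dl.
  apply: ler_wpM2r; first by rewrite invr_ge0 ltW.
  by rewrite mulrC; apply: (level_growth HB).
have : (Z k.+1)%:R / dl <= A - \sum_(j < k.+1) (Z j)%:R by rewrite ler_pdivrMr //; nra.
lra.
Qed.
End LevelGrowth.

Section CheckRoot.
Variables (L R : finType) (adj : L -> R -> bool) (S : {set L}) (g dl : nat) (c : R).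
Hypotheses (girth_le : forall p, is_cycle adj p -> (g <= size p)%N)
  (regular : left_regular adj dl) (dl_ge2 : (2 <= dl)%N) (cS : c \in Gam adj S).

Let q : rat := dl%:R - 1.
Let d := degS adj S c.
Let B : rat := #|Gam_o adj S|%:R - (c \in Gam_o adj S)%:R.
Let Z j := nwalks adj S (inr c) (2 * j + 1).
Let m j := nleaf_ends adj S (inr c) (2 * j + 2).

Let rootS : inr c \in VS adj S. Proof. by rewrite /VS inE. Qed.

Let growth j : q * (Z j)%:R <= (Z j.+1)%:R + (m j)%:R.
Proof.
rewrite /q /Z /m (_ : 2 * j.+1 + 1 = (2 * j + 1).+2)%N; last lia.
rewrite (_ : 2 * j + 2 = (2 * j + 1).+1)%N; last lia.
rewrite -(natrB _ (ltnW dl_ge2)) -natrM -natrD ler_nat.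
by apply: nwalks_two_levels regular rootS _; rewrite odd_level.
Qed.

Let base : d%:R <= (Z 0)%:R :> rat.
Proof. by rewrite ler_nat /d -(card_nbrsS_check adj S c); exact: card_nbrsS_root. Qed.

Let leaves K : (4 * K < g)%N -> \sum_(i < K) (m i)%:R <= B.
Proof.
move=> HK; rewrite /B -natr_sum lerBrDr -natrD ler_nat addnC.
apply: leq_trans (sum_levels_odd_checks S (inr c) girth_le (a := 0) (k := K.+1) _); last lia.
rewrite big_ord_recl; apply: leq_add; first by rewrite /= ?addn0.
apply: leq_sum => i _.
by rewrite /m (_ : 2 * lift ord0 i + 0 = 2 * i + 2)%N ?lift0; [exact: nleaf_ends_le | lia].
Qed.

Lemma check_root_bound_4k k : (0 < k)%N -> (4 * k <= g)%N ->
  d%:R + (d%:R * q - #|Gam_o adj S|%:R + (c \in Gam_o adj S)%:R) * \sum_(i < k - 1) q ^+ i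
    <= #|S|%:R.
Proof.
case: k => // k _ Hk; rewrite subSS subn0.
have -> : d%:R * q - #|Gam_o adj S|%:R + (c \in Gam_o adj S)%:R = d%:R * q - B.
  by rewrite /B; ring.
apply: le_trans (sum_levels_ge (pred_natr_ge1 dl_ge2) growth base (leaves _)) _; first lia.
rewrite -natr_sum ler_nat.
by apply: (sum_levels_nwalks girth_le (a := 1)) rootS _ _; rewrite ?odd_level //; lia.
Qed.

Lemma check_root_bound_4k2 k : (0 < k)%N -> (4 * k + 2 <= g)%N ->
  d%:R + (d%:R * q - #|Gam_o adj S|%:R + (c \in Gam_o adj S)%:R) * \sum_(i < k - 1) q ^+ i
    + (d%:R * q - #|Gam_o adj S|%:R + (c \in Gam_o adj S)%:R) * q ^+ (k - 1) / dl%:R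
    <= #|S|%:R.
Proof.
case: k => // k _ Hk; rewrite subSS subn0.
have -> : d%:R * q - #|Gam_o adj S|%:R + (c \in Gam_o adj S)%:R = d%:R * q - B.
  by rewrite /B; ring.
have dl_gt0 : 0 < dl%:R :> rat by rewrite ltr0n; lia.
refine (sum_levels_last_ge (pred_natr_ge1 dl_ge2) growth base dl_gt0 (leaves (K := k.+1) _) _).
  lia.
rewrite -natr_sum -!natrM -natrD ler_nat.
by apply: (last_level_nwalks girth_le (a := 1)) regular rootS _ _ _; rewrite ?odd_level //; lia.
Qed.
End CheckRoot.

Section VariableRoot.
Variables (L R : finType) (adj : L -> R -> bool) (S : {set L}) (g dl : nat) (v : L).
Hypotheses (girth_le : forall p, is_cycle adj p -> (g <= size p)%N)
  (regular : left_regular adj dl) (dl_ge2 : (2 <= dl)%N) (vS : v \in S)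
  (no_leaf : forall c, adj v c -> degS adj S c != 1%N).

Let q : rat := dl%:R - 1.
Let b := #|Gam_o adj S|.
Let Z j := nwalks adj S (inl v) (2 * j + 2).
Let m j := nleaf_ends adj S (inl v) (2 * j + 3).

Let rootS : inl v \in VS adj S. Proof. by rewrite /VS inE. Qed.

Let no_leaf_ends : nleaf_ends adj S (inl v) 1 = 0%N.
Proof.
apply/eqP; rewrite -leqn0 leqNgt -has_count; apply/hasPn => w /mem_walksS [u [y [Hu Hy ->]]].
move: Hu Hy; rewrite mem_seq1 => /eqP -> /and3P[Hvy _ _].
by case: y Hvy => //= c; apply: no_leaf.
Qed.

Let growth j : q * (Z j)%:R <= (Z j.+1)%:R + (m j)%:R.
Proof.
rewrite /q /Z /m (_ : 2 * j.+1 + 2 = (2 * j + 2).+2)%N; last lia.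
rewrite (_ : 2 * j + 3 = (2 * j + 2).+1)%N; last lia.
rewrite -(natrB _ (ltnW dl_ge2)) -natrM -natrD ler_nat.
by apply: nwalks_two_levels regular rootS _; rewrite odd_level.
Qed.

Let base : dl%:R <= (Z 0)%:R :> rat.
Proof.
rewrite ler_nat; have := card_nbrsS_root adj S (inl v).
rewrite (card_nbrsS_var regular vS) => /leq_trans; apply.
by have := nwalks_check_level (n := 1) rootS isT; rewrite no_leaf_ends addn0.
Qed.

Let leaves K : (4 * K + 2 < g)%N -> \sum_(i < K) (m i)%:R <= b%:R :> rat.
Proof.
move=> HK; rewrite -natr_sum ler_nat.
apply: leq_trans (sum_levels_odd_checks S (inl v) girth_le (a := 3) (k := K) _); last lia.
by apply: leq_sum => i _; apply: nleaf_ends_le.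
Qed.

Lemma var_root_bound_4k k : (1 < k)%N -> (4 * k <= g)%N ->
  1 + dl%:R + (dl%:R * q - b%:R) * \sum_(i < k - 2) q ^+ i
    + (dl%:R * q - b%:R) * q ^+ (k - 2) / dl%:R <= #|S|%:R.
Proof.
case: k => [|[|k]] // _ Hk; rewrite !subSS subn0.
suff : dl%:R + (dl%:R * q - b%:R) * \sum_(i < k) q ^+ i
    + (dl%:R * q - b%:R) * q ^+ k / dl%:R <= #|S|%:R - 1 by lra.
have dl_gt0 : 0 < dl%:R :> rat by rewrite ltr0n; lia.
refine (sum_levels_last_ge (pred_natr_ge1 dl_ge2) growth base dl_gt0 (leaves (K := k.+1) _) _).
  lia.
have := last_level_nwalks girth_le (a := 0) (k := k.+2) regular rootS isT.
rewrite sum_even_levels_recl (_ : 2 * k.+2 + 0 = 2 * k.+1 + 2)%N; last lia.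
move=> /(_ ltac:(lia) ltac:(lia)); rewrite (_ : nwalks adj S (inl v) 0 = 1)%N //.
by rewrite -(ler_nat rat) natrD !natrM natrD natr_sum /Z => H; nra.
Qed.

Lemma var_root_bound_4k2 k : (0 < k)%N -> (4 * k + 2 <= g)%N ->
  1 + dl%:R + (dl%:R * q - b%:R) * \sum_(i < k - 1) q ^+ i <= #|S|%:R.
Proof.
case: k => // k _ Hk; rewrite subSS subn0 -addrA.
apply: le_trans (lerD (lexx 1) (sum_levels_ge (pred_natr_ge1 dl_ge2) growth base (leaves _))) _.
  lia.
have := sum_levels_nwalks girth_le (a := 0) (k := k.+2) rootS isT.
rewrite sum_even_levels_recl => /(_ ltac:(lia)).
by rewrite -(ler_nat rat) natrD natr_sum.
Qed.
End VariableRoot.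

Theorem lemma7 (L R : finType) (adj : L -> R -> bool) (dl g : nat)
  (S : {set L}) (a b : nat) :
  left_regular adj dl -> (3 <= dl)%N -> girth adj g -> (4 < g)%N ->
  trapping_set adj S a b -> (b < a)%N -> induced_connected adj S ->
  let caseE := elementary adj S /\ (b < dl * (dl - 1))%N in
  let caseO := fun d_o : nat =>
    (exists c, c \in Gam_o adj S /\ degS adj S c = d_o) /\ (1 < d_o)%N
    /\ (b < d_o * (dl - 1))%N in
  let caseEv := fun d_e : nat =>
    (exists c, c \in Gam_e adj S /\ degS adj S c = d_e) /\ (2 < d_e)%N
    /\ (b < d_e * (dl - 1))%N in
  let q := (dl%:R - 1 : rat) in
  (* (a) g = 4k, k > 1 *)
  (forall k : nat, (1 < k)%N -> g = (4 * k)%N ->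
     (caseE ->
        a%:R >= 1 + dl%:R
                + (dl%:R * q - b%:R) * (\sum_(i < k - 2) q ^+ i)
                + (dl%:R * q - b%:R) * q ^+ (k - 2) / dl%:R)
  /\ (forall d_o, caseO d_o ->
        a%:R >= d_o%:R + (d_o%:R * q - b%:R + 1) * (\sum_(i < k - 1) q ^+ i))
  /\ (forall d_e, caseEv d_e ->
        a%:R >= d_e%:R + (d_e%:R * q - b%:R) * (\sum_(i < k - 1) q ^+ i)))
  /\
  (* (b) g = 4k+2, k > 0 *)
  (forall k : nat, (0 < k)%N -> g = (4 * k + 2)%N ->
     (caseE ->
        a%:R >= 1 + dl%:R + (dl%:R * q - b%:R) * (\sum_(i < k - 1) q ^+ i))
  /\ (forall d_o, caseO d_o ->
        a%:R >= d_o%:R + (d_o%:R * q - b%:R + 1) * (\sum_(i < k - 1) q ^+ i)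
                + (d_o%:R * q - b%:R + 1) * q ^+ (k - 1) / dl%:R)
  /\ (forall d_e, caseEv d_e ->
        a%:R >= d_e%:R + (d_e%:R * q - b%:R) * (\sum_(i < k - 1) q ^+ i)
                + (d_e%:R * q - b%:R) * q ^+ (k - 1) / dl%:R)).
Proof.
move=> regular dl_ge3 [_ girth_le] _ [Sa Gb] ba _ caseE caseO caseEv q.
subst a b; have dl_ge2 : (2 <= dl)%N by lia.
have [v vS no_leaf] := exists_var_without_leaf_check ba.
have odd_Gam c : c \in Gam_o adj S -> c \in Gam adj S by rewrite inE => /andP[].
have even_Gam c : c \in Gam_e adj S -> c \in Gam adj S /\ c \notin Gam_o adj S.
  by rewrite !inE => /andP[-> Hc]; rewrite (negbTE Hc).
split=> k k_gt g_eq; (split; [|split]).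
- by move=> _; exact (var_root_bound_4k girth_le regular dl_ge2 vS no_leaf k_gt ltac:(lia)).
- move=> _ [[c [Hc <-]] _].
  have := check_root_bound_4k girth_le regular dl_ge2 (odd_Gam c Hc) (ltnW k_gt) ltac:(lia).
  by rewrite Hc => H; exact H.
- move=> _ [[c [/even_Gam [Hc Hno] <-]] _].
  have := check_root_bound_4k girth_le regular dl_ge2 Hc (ltnW k_gt) ltac:(lia).
  by rewrite (negbTE Hno) /= mulr0n addr0 => H; exact H.
- by move=> _; exact (var_root_bound_4k2 girth_le regular dl_ge2 vS no_leaf k_gt ltac:(lia)).
- move=> _ [[c [Hc <-]] _].
  have := check_root_bound_4k2 girth_le regular dl_ge2 (odd_Gam c Hc) k_gt ltac:(lia).
  by rewrite Hc => H; exact H.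
- move=> _ [[c [/even_Gam [Hc Hno] <-]] _].
  have := check_root_bound_4k2 girth_le regular dl_ge2 Hc k_gt ltac:(lia).
  by rewrite (negbTE Hno) /= mulr0n addr0 => H; exact H.
Qed.
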